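(* Let $A$ be a commutative $\mathbb{R}$-algebra and $A^2 \subseteq A$ the subsemiring of all sums of squares. Let $M \subseteq A$ be a quadratic module for which there is $v \in A^2$ such that for every $a \in A^2$ there is $p \in \mathbb{R}_+[X]$ with $p(v) - a \in M$. Then the following are equivalent for $a \in A$: (1) $f(a) \geq 0$ for every algebra homomorphism $f : A \to \mathbb{R}$ with $f(M) \subseteq \mathbb{R}_+$. (2) For every $r \in \mathbb{R}_+$ and $\varepsilon > 0$, there exist a polynomial $q \in \mathbb{R}_+[X]$ and an element $w \in A^2$ such that $q(r) \leq \varepsilon$ and $(1 + w)\,(a + q(v)) \in M$.
   Context: A quadratic module in $A$ is a subset $M \subseteq A$ with $1 \in M$ which is closed under addition and under multiplication by elements of $A^2$ (sums of squares). *)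

From HB Require Import structures.
From mathcomp Require Import all_boot all_order all_algebra.
From mathcomp Require Import reals.
Set Implicit Arguments. Unset Strict Implicit. Unset Printing Implicit Defensive.
Import Order.TTheory GRing.Theory Num.Theory.
Local Open Scope ring_scope.

Section Defs.
Variables (R : realType) (A : comAlgType R).

Definition sos (a : A) : Prop := exists s : seq A, a = \sum_(x <- s) x ^+ 2.

Definition quadratic_module (M : A -> Prop) : Prop :=
  [/\ M 1,
      (forall x y, M x -> M y -> M (x + y)) &
      (forall s m, sos s -> M m -> M (s * m))].

Definition nonneg_poly (p : {poly R}) : Prop := forall i, 0 <= p`_i.

Definition peval (p : {poly R}) (v : A) : A := horner_alg v p.

Definition alg_hom (f : A -> R) : Prop :=
  [/\ (forall x y, f (x + y) = f x + f y),
      (forall x y, f (x * y) = f x * f y),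
      f 1 = 1 &
      (forall (c : R) x, f (c *: x) = c * f x)].
End Defs.

From HB Require Import structures.
From mathcomp Require Import all_boot all_order all_algebra.
From mathcomp Require Import reals boolp classical_sets.
From mathcomp Require Import ring lra.
Set Implicit Arguments. Unset Strict Implicit. Unset Printing Implicit Defensive.
Import Order.TTheory GRing.Theory Num.Theory.
Local Open Scope ring_scope.

(* (2) => (1): apply a character f with f(M) >= 0 to the certificate; since
   f(1 + w) > 0 and f(q(v)) = q(f v) <= eps, one gets f(a) >= -eps.

   (1) => (2): fix c := r + 1 and adjoin c - v to M. The domination hypothesis
   makes the resulting quadratic module Q archimedean, so by the archimedean
   Positivstellensatz a + eps/2 = m + s (c - v) with m in M and s a sum of
   squares. The Positivstellensatz (a + d in Q for all d > 0) is proved by a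
   dichotomy on y := a + d/2: either t y = 1 + g with t in A^2 and g in Q, and
   Jacobi's geometric-series trick gives y + d/2 in Q, or Zorn's lemma extends
   Q - y A^2 to a maximal proper quadratic module P, an archimedean ordering
   whose cut map x |-> sup {l | x - l in P} is a character negative at a.
   Finally, writing z := v / c and K := 2^k - 1, the term s (c - v) is traded
   for z^K p(v), where p(v) - s v is in M: the difference is
   z^K (p(v) - s v) + c s (1 + z^(2^k) - z), and 1 + z^(2^k) - z is a sum of
   squares. Thus q := eps/2 + c^-K p X^K and w := 0 work, as
   q(r) = eps/2 + (r/c)^K p(r) and r/c < 1. *)

Lemma bernoulli_ineq (R : realDomainType) (h : R) n :
  0 <= h -> 1 + n%:R * h <= (1 + h) ^+ n.
Proof.
move=> h0; elim: n => [|n IH]; first by rewrite mul0r addr0 expr0.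
have n0 : 0 <= n%:R :> R by [].
have nhh0 : 0 <= n%:R * h * h by rewrite !mulr_ge0.
rewrite exprS -natr1; nra.
Qed.

Lemma exists_expr_le (R : archiRealFieldType) (b k : R) :
  0 <= b -> b < 1 -> 0 < k -> exists n, b ^+ n <= k.
Proof.
move=> b0 b1 k0; have [->|bn0] := eqVneq b 0; first by exists 1%N; rewrite expr1 ltW.
have bp : 0 < b by rewrite lt_neqAle eq_sym bn0.
pose h := b^-1 - 1.
have hp : 0 < h by rewrite subr_gt0 invf_gt1.
pose n := Num.bound ((h * k)^-1).
have hn : (h * k)^-1 < n%:R by apply: archi_boundP; rewrite invr_ge0 ltW // mulr_gt0.
exists n; have -> : b = (1 + h)^-1 by rewrite /h addrC subrK invrK.
have h1n_gt0 : 0 < (1 + h) ^+ n by rewrite exprn_gt0 // ltr_wpDr // ltW.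
rewrite exprVn invf_ple ?posrE // invfM ltr_pdivrMl // in hn *.
apply: le_trans (bernoulli_ineq n (ltW hp)); apply/ltW/(lt_le_trans hn).
by rewrite mulrC ler_wpDl.
Qed.

Lemma exists_exp2_pred_le (R : archiRealFieldType) (b c e : R) :
  0 <= b -> b < 1 -> 0 <= c -> 0 < e -> exists k, b ^+ (2 ^ k).-1 * c <= e.
Proof.
move=> b0 b1 c0 e0; have c1 : 0 < 1 + c by lra.
have [k bk] := exists_expr_le b0 b1 (divr_gt0 e0 c1).
exists k; have kK : (k <= (2 ^ k).-1)%N by rewrite -ltnS prednK ?expn_gt0 // ltn_expl.
have bK : b ^+ (2 ^ k).-1 <= e / (1 + c) by apply: le_trans bk; rewrite ler_wiXn2l // ltW.
apply: (le_trans (ler_wpM2r c0 bK)); rewrite mulrAC ler_pdivrMr //; nra.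
Qed.

Section SumsOfSquares.
Variables (R : realType) (A : comAlgType R).
Implicit Types (x y : A).

Lemma sos0 : sos (0 : A). Proof. by exists [::]; rewrite big_nil. Qed.

Lemma sos_sqr x : sos (x ^+ 2). Proof. by exists [:: x]; rewrite big_seq1. Qed.

Lemma sos1 : sos (1 : A). Proof. by rewrite -(expr1n _ 2); apply: sos_sqr. Qed.

Lemma sosD x y : sos x -> sos y -> sos (x + y).
Proof. by move=> [s ->] [t ->]; exists (s ++ t); rewrite big_cat. Qed.

Lemma sos_sqrM x y : sos y -> sos (x ^+ 2 * y).
Proof.
move=> [s ->]; exists [seq x * j | j <- s].
by rewrite big_map big_distrr; apply: eq_bigr => j _; rewrite exprMn.
Qed.

Lemma sosM x y : sos x -> sos y -> sos (x * y).
Proof.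
move=> [s ->] sy; elim: s => [|j s IH]; first by rewrite big_nil mul0r; apply: sos0.
by rewrite big_cons mulrDl; apply: sosD => //; apply: sos_sqrM.
Qed.

Lemma sos_alg (c : R) : 0 <= c -> sos (c%:A : A).
Proof.
move=> c0; have <- : (Num.sqrt c)%:A ^+ 2 = c%:A :> A.
  by rewrite expr2 mulr_algl scalerA -expr2 sqr_sqrtr.
exact: sos_sqr.
Qed.

End SumsOfSquares.

Section QuadraticModule.
Variables (R : realType) (A : comAlgType R) (Q : A -> Prop).
Hypothesis qmQ : quadratic_module Q.
Implicit Types (x y z s : A).

Lemma qm1 : Q 1. Proof. by case: qmQ. Qed.

Lemma qmD x y : Q x -> Q y -> Q (x + y). Proof. by case: qmQ => _ + _; apply. Qed.

Lemma qmM s x : sos s -> Q x -> Q (s * x). Proof. by case: qmQ => _ _; apply. Qed.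

Lemma qm_sos s : sos s -> Q s.
Proof. by move=> ss; rewrite -[s]mulr1; apply: qmM (qm1). Qed.

Lemma qm0 : Q 0. Proof. exact/qm_sos/sos0. Qed.

Lemma qm_alg (c : R) : 0 <= c -> Q c%:A.
Proof. by move=> c0; apply/qm_sos/sos_alg. Qed.

Lemma qmZ (c : R) x : 0 <= c -> Q x -> Q (c *: x).
Proof. by move=> c0 Qx; rewrite -mulr_algl; apply: qmM => //; apply: sos_alg. Qed.

Lemma qmZ_inv (c : R) x : 0 < c -> Q (c *: x) -> Q x.
Proof.
move=> c0; have c'0 : 0 <= c^-1 by rewrite invr_ge0 ltW.
by move/(qmZ c'0); rewrite scalerA mulVf ?gt_eqF // scale1r.
Qed.

Lemma qmMn_inv n x : Q (n.+1%:R * x) -> Q x.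
Proof. by rewrite mulr_natl -scaler_nat; apply: qmZ_inv. Qed.

Lemma qm_sum (I : Type) (r : seq I) (P : pred I) (F : I -> A) :
  (forall i, P i -> Q (F i)) -> Q (\sum_(i <- r | P i) F i).
Proof. exact: big_ind qm0 qmD _ _ _ _. Qed.

Lemma qmX x n : Q x -> Q (x ^+ n).
Proof.
move=> Qx; have -> : x ^+ n = (x ^+ n./2) ^+ 2 * x ^+ odd n.
  by rewrite -exprM -exprD muln2 addnC odd_double_half.
by case: (odd n); rewrite ?expr1 ?expr0 ?mulr1;
  [apply: qmM | apply: qm_sos]; try apply: sos_sqr.
Qed.

Lemma qmM_compl x z (k : R) : 0 < k -> x + z = k%:A -> Q x -> Q z -> Q (x * z).
Proof.
move=> k0 xz Qx Qz; apply: (qmZ_inv k0).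
have -> : k *: (x * z) = x ^+ 2 * z + z ^+ 2 * x by rewrite -mulr_algl -xz; ring.
by apply: qmD; apply: qmM => //; apply: sos_sqr.
Qed.

Lemma qm_sqr_le (k : R) x : 0 < k -> Q (k%:A - x) -> Q (k%:A + x) ->
  Q ((k ^+ 2)%:A - x ^+ 2).
Proof.
move=> k0 Qkx Qxk; have -> : (k ^+ 2)%:A - x ^+ 2 = (k%:A - x) * (k%:A + x).
  by rewrite -!in_algE; ring.
by apply: (qmM_compl (k := k + k)); rewrite ?addr_gt0 // -!in_algE; ring.
Qed.

Lemma qm_exprn_sqr_le (k : R) x n : 0 <= k -> Q (k%:A - x ^+ 2) ->
  Q ((k ^+ n)%:A - (x ^+ n) ^+ 2).
Proof.
move=> k0 Qkx; elim: n => [|n IH]; first by rewrite !expr0 expr1n scale1r subrr; apply: qm0.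
have -> : (k ^+ n.+1)%:A - (x ^+ n.+1) ^+ 2 =
    k%:A * ((k ^+ n)%:A - (x ^+ n) ^+ 2) + (x ^+ n) ^+ 2 * (k%:A - x ^+ 2).
  by rewrite [k ^+ n.+1]exprS [x ^+ n.+1]exprS -!in_algE; ring.
by apply: qmD; apply: qmM => //; [apply: sos_alg | apply: sos_sqr].
Qed.

Lemma qm_mul_add_alg (a b e : R) x y : 0 < a -> 0 < e -> a * b <= e ^+ 2 ->
  Q (a%:A - x ^+ 2) -> Q (b%:A - y ^+ 2) -> Q (x * y + e%:A).
Proof.
move=> a0 e0 abe Qax Qby; pose k := e / a.
have k0 : 0 < k by rewrite divr_gt0.
have ka : k * a = e by rewrite divfK ?gt_eqF.
apply: (qmZ_inv (c := k + k)); first by rewrite addr_gt0.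
have -> : (k + k) *: (x * y + e%:A) = (k%:A * x + y) ^+ 2 + (k ^+ 2)%:A * (a%:A - x ^+ 2)
    + (b%:A - y ^+ 2) + (2 * k * e - k ^+ 2 * a - b)%:A.
  by rewrite -[X in X = _]mulr_algl -!in_algE; ring.
have rest : 0 <= 2 * k * e - k ^+ 2 * a - b.
  have bke : b <= k * e by rewrite /k mulrAC ler_pdivlMr // mulrC -expr2.
  have -> : k ^+ 2 * a = k * e by rewrite expr2 -mulrA ka.
  lra.
apply: qmD; last exact: qm_alg.
apply: qmD => //; apply: qmD; first by apply/qm_sos/sos_sqr.
by apply: qmM => //; apply/sos_alg/exprn_ge0/ltW.
Qed.

Lemma qm_alg_neg (c : R) : c < 0 -> Q c%:A -> Q (-1).
Proof.
move=> c0; have c'0 : 0 <= - c^-1 by rewrite oppr_ge0 invr_le0 ltW.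
by move/(qmZ c'0); rewrite scalerA mulNr mulVf ?lt_eqF // scaleN1r.
Qed.

End QuadraticModule.

Lemma sos_qm (R : realType) (A : comAlgType R) : quadratic_module (@sos R A).
Proof. by split; [apply: sos1 | apply: sosD | apply: sosM]. Qed.

Section SumsOfSquaresClosure.
Variables (R : realType) (A : comAlgType R).
Implicit Types (x : A).

Lemma sosX x n : sos x -> sos (x ^+ n). Proof. exact: (qmX (sos_qm A) n). Qed.

Lemma sosZ (c : R) x : 0 <= c -> sos x -> sos (c *: x). Proof. exact: (qmZ (sos_qm A)). Qed.

Lemma sos_1_add_pow2_sub x j : sos (1 + x ^+ (2 ^ j) - x).
Proof.
elim: j x => [|j IH] x; first by rewrite expn0 expr1 addrK; apply: sos1.
apply: (qmMn_inv (sos_qm A) (n := 1)).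
have -> : 2%:R * (1 + x ^+ (2 ^ j.+1) - x) =
    (1 + (x ^+ 2) ^+ (2 ^ j) - x ^+ 2) + (x - 1) ^+ 2 + (x ^+ (2 ^ j)) ^+ 2.
  by rewrite -!exprM mulnC -expnSr; ring.
by apply: sosD; [apply: sosD|]; [apply: IH | apply: sos_sqr ..].
Qed.

End SumsOfSquaresClosure.

Section PolynomialEvaluation.
Variables (R : realType) (A : comAlgType R).
Implicit Types (x : A) (p : {poly R}).

Lemma peval_coef p x : peval p x = \sum_(i < size p) p`_i *: x ^+ i.
Proof.
rewrite /peval -{1}[p]coefK poly_def rmorph_sum; apply: eq_bigr => i _.
by rewrite -mul_polyC rmorphM /= horner_algC rmorphXn /= horner_algX mulr_algl.
Qed.

Lemma peval_scale_mulXn p x (k : R) n :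
  peval (k ^+ n *: (p * 'X^n)) x = (k *: x) ^+ n * peval p x.
Proof.
rewrite /peval linearZ /= rmorphM rmorphXn /= horner_algX exprZn mulr_algl.
by rewrite -scalerAl [x ^+ n * _]mulrC.
Qed.

Lemma horner_nonneg_ge0 p (c : R) : nonneg_poly p -> 0 <= c -> 0 <= p.[c].
Proof.
move=> p0 c0; rewrite horner_coef; apply: sumr_ge0 => i _.
by rewrite mulr_ge0 ?exprn_ge0.
Qed.

Lemma qm_peval_le (Q : A -> Prop) p x (c : R) : quadratic_module Q ->
  nonneg_poly p -> sos x -> 0 <= c -> Q (c%:A - x) -> Q (p.[c]%:A - peval p x).
Proof.
move=> qmQ p0 sx c0 Qcx.
have Qi i : Q ((c ^+ i)%:A - x ^+ i).
  elim: i => [|i IH]; first by rewrite !expr0 scale1r subrr; apply: (qm0 qmQ).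
  have -> : (c ^+ i.+1)%:A - x ^+ i.+1 =
      c%:A * ((c ^+ i)%:A - x ^+ i) + x ^+ i * (c%:A - x).
    by rewrite [c ^+ i.+1]exprS [x ^+ i.+1]exprS -!in_algE; ring.
  by apply: (qmD qmQ); apply: (qmM qmQ) => //; [apply: sos_alg | apply: sosX].
rewrite peval_coef horner_coef scaler_suml -sumrB; apply: (qm_sum qmQ) => i _.
by rewrite -scalerA -scalerBr; apply: (qmZ qmQ).
Qed.

End PolynomialEvaluation.

Section AlgebraHomomorphism.
Variables (R : realType) (A : comAlgType R) (f : A -> R).
Hypothesis homf : alg_hom f.

Lemma alg_homD x y : f (x + y) = f x + f y. Proof. by case: homf. Qed.

Lemma alg_homM x y : f (x * y) = f x * f y. Proof. by case: homf. Qed.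

Lemma alg_homZ (c : R) x : f (c *: x) = c * f x. Proof. by case: homf. Qed.

Lemma alg_hom1 : f 1 = 1. Proof. by case: homf. Qed.

Lemma alg_hom0 : f 0 = 0.
Proof. by rewrite -(scale0r 1) alg_homZ mul0r. Qed.

Lemma alg_homN x : f (- x) = - f x.
Proof. by rewrite -scaleN1r alg_homZ mulN1r. Qed.

Lemma alg_hom_alg (c : R) : f c%:A = c.
Proof. by rewrite alg_homZ alg_hom1 mulr1. Qed.

Lemma alg_homX x n : f (x ^+ n) = f x ^+ n.
Proof. by elim: n => [|n IH]; rewrite ?expr0 ?alg_hom1 // !exprS alg_homM IH. Qed.

Lemma alg_hom_sum (I : Type) (r : seq I) (P : pred I) (F : I -> A) :
  f (\sum_(i <- r | P i) F i) = \sum_(i <- r | P i) f (F i).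
Proof. exact: (big_morph f alg_homD alg_hom0). Qed.

Lemma alg_hom_peval p v : f (peval p v) = p.[f v].
Proof.
rewrite peval_coef alg_hom_sum horner_coef; apply: eq_bigr => i _.
by rewrite alg_homZ alg_homX.
Qed.

Lemma alg_hom_sos_ge0 x : sos x -> 0 <= f x.
Proof.
move=> [s ->]; rewrite alg_hom_sum; apply: sumr_ge0 => i _.
by rewrite alg_homX sqr_ge0.
Qed.

End AlgebraHomomorphism.

Section Adjoin.
Variables (R : realType) (A : comAlgType R).
Implicit Types (Q : A -> Prop) (x z : A).

Definition qm_adjoin Q x : A -> Prop :=
  fun z => exists p s, [/\ Q p, sos s & z = p + s * x].

Lemma qm_adjoin_qm Q x : quadratic_module Q -> quadratic_module (qm_adjoin Q x).
Proof.
move=> qmQ; split.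
- by exists 1, 0; split; [apply: qm1 | apply: sos0 | rewrite mul0r addr0].
- move=> _ _ [p1 [s1 [Qp1 ss1 ->]]] [p2 [s2 [Qp2 ss2 ->]]].
  exists (p1 + p2), (s1 + s2); split; [exact: qmD | exact: sosD | ring].
- move=> s _ ss [p [t [Qp st ->]]]; exists (s * p), (s * t).
  split; [exact: qmM | exact: sosM | ring].
Qed.

Lemma qm_adjoin_sub Q x z : Q z -> qm_adjoin Q x z.
Proof. by move=> Qz; exists z, 0; split; [| apply: sos0 | rewrite mul0r addr0]. Qed.

Lemma qm_adjoin_mem Q x : quadratic_module Q -> qm_adjoin Q x x.
Proof. by move=> qmQ; exists 0, 1; split; [apply: qm0 | apply: sos1 | rewrite add0r mul1r]. Qed.

End Adjoin.

Definition qm_archimedean (R : realType) (A : comAlgType R) (Q : A -> Prop) :=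
  forall x, exists N : R, Q (N%:A - x).

Section OrderingCharacter.
Variables (R : realType) (A : comAlgType R) (P : A -> Prop).
Hypotheses (qmP : quadratic_module P) (totP : forall x, P x \/ P (- x))
  (properP : ~ P (-1)) (archP : qm_archimedean P).
Implicit Types (x y : A) (l : R).

Definition ordering_char x : R := sup [set l | P (x - l%:A)].

Local Notation chi := ordering_char.

Lemma mem_alg_ge0 l : P l%:A -> 0 <= l.
Proof. by move=> Pl; rewrite leNgt; apply/negP => /(qm_alg_neg qmP)/(_ Pl). Qed.

Lemma has_sup_char_set x : has_sup [set l | P (x - l%:A)].
Proof.
split.
  have [N PN] := archP (- x); exists (- N) => /=.
  by rewrite scaleNr opprK addrC -[x in _ + x]opprK.
have [N PN] := archP x; exists N => l /= Pl; rewrite -subr_ge0; apply: mem_alg_ge0.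
by rewrite scalerBl -[N%:A](subrK x) -addrA; apply: (qmD qmP).
Qed.

Lemma char_lt_mem x l : l < chi x -> P (x - l%:A).
Proof.
rewrite -subr_gt0 => /sup_adherent/(_ (has_sup_char_set x))[e /= Pe].
rewrite opprB addrCA subrr addr0 => le.
have -> : x - l%:A = (x - e%:A) + (e - l)%:A by rewrite scalerBl addrA subrK.
by apply: (qmD qmP) => //; apply: (qm_alg qmP); rewrite subr_ge0 ltW.
Qed.

Lemma char_gt_mem x l : chi x < l -> P (l%:A - x).
Proof.
move=> lt_l; case: (totP (x - l%:A)); last by rewrite opprB.
by move/(sup_upper_bound (has_sup_char_set x)); rewrite leNgt lt_l.
Qed.

Lemma char_sep x (a b : R) : (forall l, l < a -> P (x - l%:A)) ->
  (forall l, b < l -> P (l%:A - x)) -> a <= b.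
Proof.
move=> lo hi; rewrite leNgt; apply/negP => ba.
have Pb : P (((b + b + a) / 3%:R)%:A - x) by apply: hi; lra.
have Pa : P (x - ((b + a + a) / 3%:R)%:A) by apply: lo; lra.
have /mem_alg_ge0 : P (((b + b + a) / 3%:R - (b + a + a) / 3%:R)%:A).
  by rewrite scalerBl -[X in X - _](subrK x) -addrA; apply: (qmD qmP).
lra.
Qed.

Lemma char_eq x (a : R) : (forall l, l < a -> P (x - l%:A)) ->
  (forall l, a < l -> P (l%:A - x)) -> chi x = a.
Proof.
move=> lo hi; apply/eqP; rewrite eq_le.
by rewrite (char_sep (@char_lt_mem x) hi) (char_sep lo (@char_gt_mem x)).
Qed.

Lemma charD x y : chi (x + y) = chi x + chi y.
Proof.
apply: char_eq => l lt_l.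
  pose d := (chi x + chi y - l) / 2%:R.
  have -> : l = (chi x - d) + (chi y - d) by rewrite /d; lra.
  have -> : x + y - ((chi x - d) + (chi y - d))%:A =
      (x - (chi x - d)%:A) + (y - (chi y - d)%:A) by rewrite -!in_algE; ring.
  by apply: (qmD qmP); apply: char_lt_mem; rewrite /d; lra.
pose d := (l - chi x - chi y) / 2%:R.
have -> : l = (chi x + d) + (chi y + d) by rewrite /d; lra.
have -> : ((chi x + d) + (chi y + d))%:A - (x + y) =
    ((chi x + d)%:A - x) + ((chi y + d)%:A - y) by rewrite -!in_algE; ring.
by apply: (qmD qmP); apply: char_gt_mem; rewrite /d; lra.
Qed.

Lemma charN x : chi (- x) = - chi x.
Proof.
apply: char_eq => l lt_l.
  rewrite (_ : - x - l%:A = (- l)%:A - x); first by apply: char_gt_mem; lra.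
  by rewrite scaleNr addrC.
rewrite (_ : l%:A - - x = x - (- l)%:A); first by apply: char_lt_mem; lra.
by rewrite scaleNr !opprK addrC.
Qed.

Lemma charB x y : chi (x - y) = chi x - chi y.
Proof. by rewrite charD charN. Qed.

Lemma char1 : chi 1 = 1.
Proof.
apply: char_eq => l lt_l.
  by rewrite -[X in X - _]scale1r -scalerBl; apply: (qm_alg qmP); lra.
by rewrite -[X in _ - X]scale1r -scalerBl; apply: (qm_alg qmP); lra.
Qed.

Lemma charZ (c : R) x : chi (c *: x) = c * chi x.
Proof.
wlog c0 : c x / 0 <= c.
  move=> Hpos; have [/Hpos//|/ltW] := leP 0 c.
  rewrite -oppr_ge0 => /(Hpos _ (- x)).
  by rewrite scaleNr scalerN opprK charN mulrNN.
have [<-|c_gt0] := eqVneq 0 c.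
  by rewrite scale0r mul0r -(subrr 1) charB subrr.
have {c0}c_gt0 : 0 < c by rewrite lt_neqAle c_gt0.
apply: char_eq => l lt_l.
  have /char_lt_mem/(qmZ qmP (ltW c_gt0)) : l / c < chi x by rewrite ltr_pdivrMr // mulrC.
  by rewrite scalerBr scalerA mulrC divfK ?gt_eqF.
have /char_gt_mem/(qmZ qmP (ltW c_gt0)) : chi x < l / c by rewrite ltr_pdivlMr // mulrC.
by rewrite scalerBr scalerA mulrC divfK ?gt_eqF.
Qed.

Lemma char_alg (c : R) : chi c%:A = c.
Proof. by rewrite charZ char1 mulr1. Qed.

Lemma char_ge0 x : P x -> 0 <= chi x.
Proof.
move=> Px; rewrite leNgt; apply/negP => neg.
have /mem_alg_ge0 : P ((chi x / 2%:R)%:A).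
  by rewrite -[_%:A](subrK x); apply: (qmD qmP) => //; apply: char_gt_mem; lra.
lra.
Qed.

Lemma char_sqr x : chi (x ^+ 2) = chi x ^+ 2.
Proof.
pose z := x - (chi x)%:A.
have chiz : chi z = 0 by rewrite charB char_alg subrr.
have chiz2 : chi (z ^+ 2) = 0.
  apply: char_eq => l lt_l.
    by rewrite -scaleNr; apply: (qmD qmP); [apply: (qm_sos qmP); apply: sos_sqr
                                           | apply: (qm_alg qmP); lra].
  rewrite -(sqr_sqrtr (ltW lt_l)); have e_gt0 : 0 < Num.sqrt l by rewrite sqrtr_gt0.
  apply: (qm_sqr_le qmP) => //; first by apply: char_gt_mem; rewrite chiz.
  by rewrite -[z]opprK; apply: char_gt_mem; rewrite charN chiz oppr0.
have -> : x ^+ 2 = z ^+ 2 + (2 * chi x) *: z + (chi x ^+ 2)%:A.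
  by rewrite /z -!in_algE -mulr_algl -in_algE; ring.
by rewrite !charD chiz2 charZ chiz char_alg mulr0 !add0r.
Qed.

Lemma charM x y : chi (x * y) = chi x * chi y.
Proof.
have -> : x * y = 4%:R^-1 *: ((x + y) ^+ 2 - (x - y) ^+ 2).
  apply: (@scalerI _ _ 4%:R); first by rewrite pnatr_eq0.
  by rewrite scalerA mulfV ?pnatr_eq0 // scale1r -mulr_algl -in_algE; ring.
rewrite charZ charB !char_sqr charD charB.
by apply: (@mulfI _ 4%:R); rewrite ?pnatr_eq0 // mulrA mulfV ?pnatr_eq0 //; ring.
Qed.

Lemma ordering_char_hom : alg_hom chi.
Proof. by split; [apply: charD | apply: charM | apply: char1 | apply: charZ]. Qed.

End OrderingCharacter.

Section MaximalQuadraticModule.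
Variables (R : realType) (A : comAlgType R).
Implicit Types (Q P : A -> Prop) (F : set (set A)).
Local Open Scope classical_set_scope.

Definition proper_qm Q := quadratic_module Q /\ ~ Q (-1).

Lemma qm_bigcup_chain F : F !=set0 -> (forall X, F X -> quadratic_module X) ->
  total_on F subset -> quadratic_module (\bigcup_(X in F) X).
Proof.
move=> [X0 FX0] qmF totF; split.
- by exists X0 => //; apply: (qm1 (qmF _ FX0)).
- move=> x y [X1 FX1 X1x] [X2 FX2 X2y].
  have [X12|X21] := totF _ _ FX1 FX2.
    by exists X2 => //; apply: (qmD (qmF _ FX2)) => //; apply: X12.
  by exists X1 => //; apply: (qmD (qmF _ FX1)) => //; apply: X21.
- by move=> s z ss [X FX Xz]; exists X => //; apply: (qmM (qmF _ FX)).
Qed.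

Lemma exists_maximal_proper_qm Q : proper_qm Q -> exists P,
  [/\ proper_qm P, Q `<=` P & forall B, proper_qm B -> P `<=` B -> B `<=` P].
Proof.
move=> propQ; pose good X := proper_qm X /\ Q `<=` X.
have chain_good F : F `<=` [set X | X = set0 \/ good X] -> total_on F subset ->
    (\bigcup_(X in F) X = set0 \/ good (\bigcup_(X in F) X)).
  move=> famF totF; pose F' := [set X | F X /\ X !=set0].
  have goodF' X : F' X -> good X by move=> [/famF[->[]|]].
  have -> : \bigcup_(X in F) X = \bigcup_(X in F') X.
    by apply/seteqP; split=> z [X FX Xz]; exists X => //; [split=> //; exists z | case: FX].
  have [[X0 F'X0]|noF'] := pselect (F' !=set0); last first.
    by left; apply/seteqP; split=> z // [X F'X _]; apply: noF'; exists X.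
  right; split; last by move=> z Qz; exists X0 => //; apply: (goodF' _ F'X0).2.
  split; last by move=> [X /goodF'[[_ nX] _]].
  apply: qm_bigcup_chain => [|X /goodF'[[]]//|X Y [FX _] [FY _]]; first by exists X0.
  exact: totF.
have [P [famP maxP]] := Zorn_bigcup chain_good.
have goodP : good P.
  case: famP => // P0; exfalso; apply: (maxP Q); last by right; split.
  by rewrite P0; split=> // /(_ 1 (qm1 propQ.1)).
exists P; split; [exact: goodP.1 | exact: goodP.2 |].
move=> B propB PB z Bz; apply: contrapT => nPz; apply: (maxP B); last first.
  by right; split=> // y /goodP.2/PB.
by split=> // BP; apply/nPz/BP.
Qed.

Lemma maximal_qm_total P : proper_qm P ->
    (forall B, proper_qm B -> P `<=` B -> B `<=` P) ->
  forall x, P x \/ P (- x).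
Proof.
move=> [qmP nP] maxP.
have adjoin_neg1 x : ~ P x -> qm_adjoin P x (-1).
  move=> nPx; apply: contrapT => nadj; apply/nPx/(maxP (qm_adjoin P x)).
  - by split; first exact: qm_adjoin_qm.
  - by move=> z; apply: qm_adjoin_sub.
  - exact: qm_adjoin_mem.
move=> x; have [|nPx] := pselect (P x); first by left.
have [|nPNx] := pselect (P (- x)); first by right.
have [p1 [s1 [Pp1 ss1 e1]]] := adjoin_neg1 x nPx.
have [p2 [s2 [Pp2 ss2 e2]]] := adjoin_neg1 (- x) nPNx.
have ep1 : p1 = -1 - s1 * x by rewrite e1; ring.
have ep2 : p2 = -1 + s2 * x by rewrite e2; ring.
have Ps : P (- (s1 + s2)).
  have -> : - (s1 + s2) = s2 * p1 + s1 * p2 by rewrite ep1 ep2; ring.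
  by apply: (qmD qmP); apply: (qmM qmP).
have PNs1 : P (- s1).
  have -> : - s1 = - (s1 + s2) + s2 by ring.
  by apply: (qmD qmP) => //; apply: (qm_sos qmP).
have Ps1x : P (s1 * x).
  apply: (qmMn_inv qmP (n := 3)).
  have -> : 4%:R * (s1 * x) = (x + 1) ^+ 2 * s1 + (x - 1) ^+ 2 * - s1 by ring.
  apply: (qmD qmP); apply: (qmM qmP) => //; try exact: sos_sqr.
  exact: (qm_sos qmP).
by exfalso; apply: nP; rewrite e1; apply: (qmD qmP).
Qed.

End MaximalQuadraticModule.

Section ArchimedeanPositivstellensatz.
Variables (R : realType) (A : comAlgType R) (Q : A -> Prop).
Hypotheses (qmQ : quadratic_module Q) (archQ : qm_archimedean Q).
Implicit Types (x y : A).

Lemma qm_archimedean_ge1 x : exists2 N : R, 1 <= N & Q (N%:A - x).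
Proof.
have [N QN] := archQ x; exists (Num.max N 1); first by rewrite le_max lexx orbT.
rewrite -[_%:A](subrK N%:A) -scalerBl -addrA addrC.
by apply: (qmD qmQ) => //; apply: (qm_alg qmQ); rewrite subr_ge0 le_max lexx.
Qed.

Lemma qm_archimedean_sqr x : exists2 L : R, 0 < L & Q ((L ^+ 2)%:A - x ^+ 2).
Proof.
have [N1 N1_ge1 QN1] := qm_archimedean_ge1 x.
have [N2 N2_ge1 QN2] := qm_archimedean_ge1 (- x).
pose L := Num.max N1 N2; exists L; first by rewrite lt_max (lt_le_trans ltr01).
have QL N z : N <= L -> Q (N%:A - z) -> Q (L%:A - z).
  move=> NL QN; rewrite -[L%:A](subrK N%:A) -scalerBl -addrA addrC.
  by apply: (qmD qmQ) => //; apply: (qm_alg qmQ); rewrite subr_ge0.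
apply: (qm_sqr_le qmQ); first by rewrite lt_max (lt_le_trans ltr01).
  by apply: (QL N1) => //; rewrite le_max lexx.
by rewrite -[x]opprK; apply: (QL N2) => //; rewrite le_max lexx orbT.
Qed.

(* Jacobi's trick: with u := 1 - c (1 + g) one has 0 <= u <= b < 1 modulo Q, and
   y = c t y^2 (1 + u + ... + u^(n-1)) + y u^n, where the last term is small. *)
Lemma qm_add_alg_of_sos_mul t g y (e : R) : sos t -> Q g -> t * y = 1 + g ->
  0 < e -> Q (y + e%:A).
Proof.
move=> st Qg ety e0.
have [G G_ge1 QG] := qm_archimedean_ge1 g.
have [L L0 QL] := qm_archimedean_sqr y.
pose c := (1 + G)^-1; pose b := 1 - c; pose u := 1 - c%:A * (1 + g).
have c0 : 0 < c by rewrite invr_gt0; lra.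
have b0 : 0 < b by rewrite /b subr_gt0 invf_lt1; lra.
have b1 : b < 1 by rewrite /b; lra.
have Qu : Q u.
  have -> : u = c%:A * (G%:A - g).
    have G0 : 0 < 1 + G by lra.
    have cG : (1 : A) = (c * (1 + G))%:A by rewrite mulVf ?scale1r ?gt_eqF.
    by rewrite /u {1}cG -!in_algE; ring.
  by apply: (qmM qmQ) => //; apply/sos_alg/ltW.
have Qbu : Q (b%:A - u).
  have -> : b%:A - u = c%:A * g by rewrite /b /u -!in_algE; ring.
  by apply: (qmM qmQ) => //; apply/sos_alg/ltW.
have Qbu2 : Q ((b ^+ 2)%:A - u ^+ 2).
  apply: (qm_sqr_le qmQ) => //; rewrite addrC.
  by apply: (qmD qmQ) => //; apply: (qm_alg qmQ); lra.
have [n small] : exists n, (b ^+ 2) ^+ n <= e ^+ 2 / L ^+ 2.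
  apply: exists_expr_le; rewrite ?sqr_ge0 ?divr_gt0 ?exprn_gt0 //.
  by rewrite expr_lt1 //; lra.
have Qtail : Q (y * u ^+ n + e%:A).
  apply: (qm_mul_add_alg qmQ (a := L ^+ 2) (b := (b ^+ 2) ^+ n)) => //.
  - exact: exprn_gt0.
  - by rewrite mulrC -ler_pdivlMr ?exprn_gt0.
  - by apply: (qm_exprn_sqr_le qmQ); rewrite ?sqr_ge0.
have Qhead : Q (t * y ^+ 2 * (c%:A * \sum_(i < n) u ^+ i)).
  apply: (qmM qmQ); first by apply: sosM => //; apply: sos_sqr.
  apply: (qmM qmQ); first by apply/sos_alg/ltW.
  by apply: (qm_sum qmQ) => i _; apply: (qmX qmQ).
have -> : y + e%:A = t * y ^+ 2 * (c%:A * \sum_(i < n) u ^+ i) + (y * u ^+ n + e%:A).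
  have geo : c%:A * (1 + g) * \sum_(i < n) u ^+ i = 1 - u ^+ n.
    by rewrite -opprB subrX1 /u; ring.
  have -> : t * y ^+ 2 * (c%:A * \sum_(i < n) u ^+ i) = y * (1 - u ^+ n).
    by rewrite -geo -ety; ring.
  ring.
exact: (qmD qmQ).
Qed.

Lemma archimedean_psatz a (d : R) : 0 < d ->
    (forall f, alg_hom f -> (forall z, Q z -> 0 <= f z) -> 0 <= f a) ->
  Q (a + d%:A).
Proof.
move=> d0 nonneg; pose y := a + (d / 2%:R)%:A.
have [[t [g [st Qg ety]]]|no_cert] :=
    pselect (exists t g, [/\ sos t, Q g & t * y = 1 + g]).
  have := qm_add_alg_of_sos_mul st Qg ety (_ : 0 < d / 2%:R).
  by rewrite /y -addrA -scalerDl -splitr; apply; lra.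
have propQy : proper_qm (qm_adjoin Q (- y)).
  split; first exact: qm_adjoin_qm.
  move=> [p [s [Qp ss e1]]]; apply: no_cert; exists s, p; split => //.
  have -> : 1 = - (p + s * - y) by rewrite -e1 opprK.
  ring.
have [P [propP QyP maxP]] := exists_maximal_proper_qm propQy.
have totP := maximal_qm_total propP maxP.
have archP : qm_archimedean P.
  by move=> x; have [N QN] := archQ x; exists N; apply/QyP/qm_adjoin_sub.
have char_ge0P := char_ge0 propP.1 totP propP.2 archP.
have homP := ordering_char_hom propP.1 totP propP.2 archP.
have : 0 <= ordering_char P a.
  by apply: nonneg => // z Qz; apply/char_ge0P/QyP/qm_adjoin_sub.
have /char_ge0P : P (- y) by apply/QyP/qm_adjoin_mem.
by rewrite alg_homN // alg_homD // alg_hom_alg //; lra.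
Qed.

End ArchimedeanPositivstellensatz.

Section Certificates.
Variables (R : realType) (A : comAlgType R) (M : A -> Prop) (v : A).
Hypotheses (Mqm : quadratic_module M) (sv : sos v).

Lemma alg_hom_ge0_of_certificates a :
    (forall r e : R, 0 <= r -> 0 < e -> exists (q : {poly R}) (w : A),
       [/\ nonneg_poly q, sos w, q.[r] <= e & M ((1 + w) * (a + peval q v))]) ->
  forall f, alg_hom f -> (forall m, M m -> 0 <= f m) -> 0 <= f a.
Proof.
move=> cert f homf fM; rewrite leNgt; apply/negP => fa_lt0.
have [|q [w [_ sw qr Mqw]]] := cert (f v) (- f a / 2%:R) (alg_hom_sos_ge0 homf sv).
  lra.
have := fM _ Mqw; have := alg_hom_sos_ge0 homf sw.
rewrite alg_homM // !alg_homD // alg_hom1 // alg_hom_peval // => fw0.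
rewrite pmulr_rge0; lra.
Qed.

Definition dominates_sos :=
  forall a, sos a -> exists p : {poly R}, nonneg_poly p /\ M (peval p v - a).

Hypothesis domv : dominates_sos.

Lemma qm_adjoin_archimedean (c : R) : 0 <= c ->
  qm_archimedean (qm_adjoin M (c%:A - v)).
Proof.
move=> c0 x; have qmMc := qm_adjoin_qm (c%:A - v) Mqm.
have [p [p0 Mp]] := domv (sos_sqr x); have pc0 := horner_nonneg_ge0 p0 c0.
exists (1 + p.[c]); apply: (qmMn_inv qmMc (n := 1)).
have -> : 2%:R * ((1 + p.[c])%:A - x) = (x - 1) ^+ 2 + (p.[c]%:A - peval p v)
    + (peval p v - x ^+ 2) + (1 + p.[c])%:A by rewrite -!in_algE; ring.
apply: (qmD qmMc); last by apply: (qm_alg qmMc); lra.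
apply: (qmD qmMc); last exact: qm_adjoin_sub.
apply: (qmD qmMc); first by apply/(qm_sos qmMc)/sos_sqr.
by apply: (qm_peval_le qmMc) => //; apply: qm_adjoin_mem.
Qed.

Lemma qm_trade_mul_sub (c : R) s w k : 0 < c -> sos s -> M (w - s * v) ->
  M (s * (c%:A - v) + (c^-1 *: v) ^+ (2 ^ k).-1 * w).
Proof.
move=> c_gt0 ss Mw; pose z := c^-1 *: v.
have vz : v = c%:A * z by rewrite /z mulr_algl scalerA mulfV ?gt_eqF // scale1r.
have zK : z ^+ (2 ^ k) = z ^+ (2 ^ k).-1 * z by rewrite -exprSr prednK ?expn_gt0.
have -> : s * (c%:A - v) + z ^+ (2 ^ k).-1 * w =
    z ^+ (2 ^ k).-1 * (w - s * v) + c%:A * (s * (1 + z ^+ (2 ^ k) - z)).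
  by rewrite zK vz; ring.
apply: (qmD Mqm).
  by apply: (qmM Mqm) => //; apply/sosX/sosZ => //; rewrite invr_ge0 ltW.
apply/(qm_sos Mqm)/sosM; first by apply/sos_alg/ltW.
by apply: sosM => //; apply: sos_1_add_pow2_sub.
Qed.

Lemma certificate_of_adjoin a (r d : R) : 0 <= r -> 0 < d ->
    qm_adjoin M ((r + 1)%:A - v) (a + d%:A) ->
  exists q : {poly R}, [/\ nonneg_poly q, q.[r] <= d + d & M (a + peval q v)].
Proof.
move=> r0 d0 [m [s [Mm ss e]]]; pose c := r + 1.
have c0 : 0 < c by rewrite /c; lra.
have [p [p0 Mp]] := domv (sosM ss sv).
have [k small] : exists k, (r / c) ^+ (2 ^ k).-1 * p.[r] <= d.
  apply: exists_exp2_pred_le => //; last exact: horner_nonneg_ge0.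
    by rewrite divr_ge0 // ltW.
  by rewrite ltr_pdivrMr // mul1r /c; lra.
exists (d%:P + c^-1 ^+ (2 ^ k).-1 *: (p * 'X^((2 ^ k).-1))); split.
- move=> i; rewrite coefD coefC coefZ coefMXn; apply: addr_ge0.
    by case: (i == 0%N) => //; apply: ltW.
  by rewrite mulr_ge0 ?exprn_ge0 ?invr_ge0 ?(ltW c0) //; case: ifP => // _; apply: p0.
- rewrite hornerD hornerC hornerZ hornerM hornerXn lerD2l; apply: le_trans small.
  by rewrite mulrCA -exprMn mulrC (mulrC c^-1).
- rewrite /peval rmorphD /= horner_algC -/(peval _ _) peval_scale_mulXn addrA e -addrA.
  exact/(qmD Mqm)/qm_trade_mul_sub.
Qed.

End Certificates.

Theorem theorem4p5 (R : realType) (A : comAlgType R) (M : A -> Prop) (v : A) :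
  quadratic_module M ->
  sos v ->
  (forall a : A, sos a -> exists p : {poly R}, nonneg_poly p /\ M (peval p v - a)) ->
  forall a : A,
    (forall f : A -> R, alg_hom f -> (forall m, M m -> 0 <= f m) -> 0 <= f a)
    <->
    (forall r eps : R, 0 <= r -> 0 < eps ->
       exists (q : {poly R}) (w : A),
         [/\ nonneg_poly q, sos w, q.[r] <= eps & M ((1 + w) * (a + peval q v))]).
Proof.
move=> Mqm sv domv a; split; last exact: alg_hom_ge0_of_certificates.
move=> a_ge0 r e r0 e0; have r1 : 0 <= r + 1 by lra.
have qmMr := qm_adjoin_qm ((r + 1)%:A - v) Mqm.
have Ma : qm_adjoin M ((r + 1)%:A - v) (a + (e / 2%:R)%:A).
  apply: (archimedean_psatz qmMr (qm_adjoin_archimedean Mqm sv domv r1)); first lra.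
  by move=> f homf fM; apply: a_ge0 => // m Mm; apply/fM/qm_adjoin_sub.
have [|q [q0 qr Mq]] := certificate_of_adjoin Mqm sv domv r0 _ Ma; first lra.
exists q, 0; split=> //; first exact: sos0.
- by rewrite -splitr in qr.
- by rewrite addr0 mul1r.
Qed.
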